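(* Let $m,n$ be integers with $0\le m\le n$. If $H\le G_n$ and $H$ has derived length $m$, then $H$ is isomorphic to a subgroup of $G_m$.
   Context: For a group $A$, $A\wr\mathbf{Z}=(\bigoplus_{i\in\mathbf{Z}}A)\rtimes\mathbf{Z}$ is the restricted wreath product with $\mathbf{Z}$ acting by index shift. $G_0$ is the trivial group and $G_n=\bigoplus_{i\in\mathbf{Z}}(G_{n-1}\wr\mathbf{Z})$ for $n\ge1$. *)

From Stdlib Require Import ZArith Lia ProofIrrelevance FunctionalExtensionality.
Open Scope Z_scope.

(* Only the two facts
   one*one = one and one^-1 = one are recorded (needed to build finitely
   supported functions); the group G_n below are genuine groups. *)
Record grp := Grp {
  car : Type;
  one : car;
  mul : car -> car -> car;
  inv : car -> car;
  mul11 : mul one one = one;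
  inv1 : inv one = one }.

Definition finsupp (A : grp) (f : Z -> car A) : Prop :=
  exists N : Z, forall i, N < Z.abs i -> f i = one A.

Definition FS (A : grp) := { f : Z -> car A | finsupp A f }.

Lemma finsupp_one A : finsupp A (fun _ => one A).
Proof. exists 0; auto. Qed.

Lemma finsupp_mul A f g : finsupp A f -> finsupp A g ->
  finsupp A (fun i => mul A (f i) (g i)).
Proof.
intros [N Hf] [M Hg]; exists (Z.max N M); intros i Hi.
rewrite Hf, Hg by lia; apply mul11.
Qed.

Lemma finsupp_inv A f : finsupp A f -> finsupp A (fun i => inv A (f i)).
Proof. intros [N Hf]; exists N; intros i Hi; rewrite Hf by lia; apply inv1. Qed.

Lemma finsupp_shift A k f : finsupp A f -> finsupp A (fun i => f (i - k)).
Proof. intros [N Hf]; exists (N + Z.abs k); intros i Hi; apply Hf; lia. Qed.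

Definition fs_one A : FS A := exist _ _ (finsupp_one A).
Definition fs_mul A (f g : FS A) : FS A :=
  exist _ _ (finsupp_mul A _ _ (proj2_sig f) (proj2_sig g)).
Definition fs_inv A (f : FS A) : FS A :=
  exist _ _ (finsupp_inv A _ (proj2_sig f)).
Definition fs_shift A (k : Z) (f : FS A) : FS A :=
  exist _ _ (finsupp_shift A k _ (proj2_sig f)).

Lemma FS_eq A (f g : FS A) : proj1_sig f = proj1_sig g -> f = g.
Proof. destruct f, g; simpl; intros ->; f_equal; apply proof_irrelevance. Qed.

Lemma fs_mul11 A : fs_mul A (fs_one A) (fs_one A) = fs_one A.
Proof. apply FS_eq; simpl; apply functional_extensionality; intros; apply mul11. Qed.

Lemma fs_inv1 A : fs_inv A (fs_one A) = fs_one A.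
Proof. apply FS_eq; simpl; apply functional_extensionality; intros; apply inv1. Qed.

Definition DS (A : grp) : grp :=
  Grp (FS A) (fs_one A) (fs_mul A) (fs_inv A) (fs_mul11 A) (fs_inv1 A).

Definition wr_one A : FS A * Z := (fs_one A, 0).
Definition wr_mul A (x y : FS A * Z) : FS A * Z :=
  (fs_mul A (fst x) (fs_shift A (snd x) (fst y)), snd x + snd y).
Definition wr_inv A (x : FS A * Z) : FS A * Z :=
  (fs_shift A (- snd x) (fs_inv A (fst x)), - snd x).

Lemma wr_mul11 A : wr_mul A (wr_one A) (wr_one A) = wr_one A.
Proof.
unfold wr_mul, wr_one; simpl; f_equal.
apply FS_eq; simpl; apply functional_extensionality; intros; apply mul11.
Qed.

Lemma wr_inv1 A : wr_inv A (wr_one A) = wr_one A.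
Proof.
unfold wr_inv, wr_one; simpl; f_equal.
apply FS_eq; simpl; apply functional_extensionality; intros; apply inv1.
Qed.

Definition Wreath (A : grp) : grp :=
  Grp (FS A * Z) (wr_one A) (wr_mul A) (wr_inv A) (wr_mul11 A) (wr_inv1 A).

Definition Triv : grp :=
  Grp unit tt (fun _ _ => tt) (fun _ => tt) eq_refl eq_refl.

Fixpoint Gr (n : nat) : grp :=
  match n with
  | O => Triv
  | S k => DS (Wreath (Gr k))
  end.

Definition is_subgroup (A : grp) (H : car A -> Prop) : Prop :=
  H (one A) /\ (forall x y, H x -> H y -> H (mul A x y)) /\
  (forall x, H x -> H (inv A x)).

Inductive gen (A : grp) (S : car A -> Prop) : car A -> Prop :=
  | gen_in : forall x, S x -> gen A S x
  | gen_one : gen A S (one A)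
  | gen_mul : forall x y, gen A S x -> gen A S y -> gen A S (mul A x y)
  | gen_inv : forall x, gen A S x -> gen A S (inv A x).

Definition commutator (A : grp) (x y : car A) : car A :=
  mul A (mul A (inv A x) (inv A y)) (mul A x y).

Fixpoint derived (A : grp) (k : nat) (H : car A -> Prop) : car A -> Prop :=
  match k with
  | O => H
  | S k' => gen A (fun z => exists a b, derived A k' H a /\ derived A k' H b /\
                                      z = commutator A a b)
  end.

Definition derived_length (A : grp) (H : car A -> Prop) (m : nat) : Prop :=
  (forall x, derived A m H x -> x = one A) /\
  (forall k, (k < m)%nat -> exists x, derived A k H x /\ x <> one A).

(* the group H is isomorphic to a subgroup of B: there is an injective
   homomorphism from H into B (its image is then a subgroup of B) *)
Definition embeds_into (A : grp) (H : car A -> Prop) (B : grp) : Prop :=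
  exists phi : car A -> car B,
    (forall x y, H x -> H y -> phi (mul A x y) = mul B (phi x) (phi y)) /\
    (forall x y, H x -> H y -> phi x = phi y -> x = y).

(* We prove more generally, by induction on n, that every subgroup H of G_n whose m-th derived
   subgroup is trivial embeds into G_m.

   Embeddings into a restricted sum (+)_Z B are built coordinate by coordinate, and (+)_Z G_m embeds
   into G_m through a pairing Z x Z -> Z; so it suffices to embed each coordinate projection K of H,
   a subgroup of A wr Z with A = G_(n-1).  If K lies in the base group it is a subgroup of (+)_Z A.
   Otherwise the shifts of K form a group dZ with d > 0; cutting Z into blocks of length d embeds
   A wr dZ into ((+)_Z A) wr Z, where K now contains some (g, 1), and conjugating by the cumulative
   products of g (an element of the unrestricted product) turns (g, 1) into the pure shift (1, 1).
   Then every coordinate of every element of K lies in M = {f 0 | (f, 0) in K}, and M is contained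
   in the image of [K, K] under the 0-th coordinate, so M has derived length below m and
   K <= M wr Z <= G_(m-1) wr Z <= G_m. *)

From Stdlib Require Import ZArith Lia FunctionalExtensionality ClassicalEpsilon Wf_nat Cantor.
Open Scope Z_scope.

Record is_group (A : grp) : Prop := {
  mulgA : forall x y z, mul A x (mul A y z) = mul A (mul A x y) z;
  mul1g : forall x, mul A (one A) x = x;
  mulg1 : forall x, mul A x (one A) = x;
  mulVg : forall x, mul A (inv A x) x = one A;
  mulgV : forall x, mul A x (inv A x) = one A }.

Arguments mulgA {A}.
Arguments mul1g {A}.
Arguments mulg1 {A}.
Arguments mulVg {A}.
Arguments mulgV {A}.

Section GroupFacts.

Variable A : grp.
Hypothesis GA : is_group A.

Lemma mulgI x y z : mul A x y = mul A x z -> y = z.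
Proof.
intros E.
rewrite <- (mul1g GA y), <- (mul1g GA z), <- (mulVg GA x), <- !(mulgA GA), E.
reflexivity.
Qed.

Lemma mulIg x y z : mul A y x = mul A z x -> y = z.
Proof.
intros E.
rewrite <- (mulg1 GA y), <- (mulg1 GA z), <- (mulgV GA x), !(mulgA GA), E.
reflexivity.
Qed.

Lemma invg_unique x y : mul A x y = one A -> y = inv A x.
Proof. intros E; apply (mulgI x); rewrite E, (mulgV GA); reflexivity. Qed.

Lemma invgK x : inv A (inv A x) = x.
Proof. symmetry; apply invg_unique, (mulVg GA). Qed.

End GroupFacts.

Ltac fs_ext i := apply FS_eq; simpl; apply functional_extensionality; intros i.

Lemma Triv_group : is_group Triv.
Proof. split; intros; simpl; try destruct x; reflexivity. Qed.

Lemma DS_group A : is_group A -> is_group (DS A).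
Proof.
intros GA; split; intros; fs_ext i;
  [apply (mulgA GA) | apply (mul1g GA) | apply (mulg1 GA) | apply (mulVg GA) | apply (mulgV GA)].
Qed.

Lemma Wreath_group A : is_group A -> is_group (Wreath A).
Proof.
intros GA; split; intros [f s]; simpl; unfold wr_mul, wr_one, wr_inv; simpl.
- intros [g t] [h u]; simpl; f_equal; [fs_ext i | lia].
  rewrite (mulgA GA), Z.sub_add_distr; reflexivity.
- f_equal; fs_ext i; rewrite Z.sub_0_r; apply (mul1g GA).
- f_equal; [fs_ext i | lia]; apply (mulg1 GA).
- f_equal; [fs_ext i | lia]; apply (mulVg GA).
- f_equal; [fs_ext i | lia]; rewrite Z.sub_opp_r, Z.sub_add; apply (mulgV GA).
Qed.

Lemma Gr_group n : is_group (Gr n).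
Proof.
induction n as [|n IHn]; [apply Triv_group | apply DS_group, Wreath_group, IHn].
Qed.

Definition hom_on (A B : grp) (phi : car A -> car B) (S : car A -> Prop) : Prop :=
  forall x y, S x -> S y -> phi (mul A x y) = mul B (phi x) (phi y).

Definition inj_on (A B : grp) (phi : car A -> car B) (S : car A -> Prop) : Prop :=
  forall x y, S x -> S y -> phi x = phi y -> x = y.

Definition img (A B : grp) (phi : car A -> car B) (S : car A -> Prop) : car B -> Prop :=
  fun y => exists x, S x /\ y = phi x.

Definition trivial_set (A : grp) (S : car A -> Prop) : Prop := forall x, S x -> x = one A.

Definition subset (A : grp) (S T : car A -> Prop) : Prop := forall x, S x -> T x.

Lemma gen_min A S U : is_subgroup A U -> subset A S U -> subset A (gen A S) U.
Proof. intros [U1 [UM UV]] SU x Hx; induction Hx; auto. Qed.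

Lemma gen_is_subgroup A S : is_subgroup A (gen A S).
Proof. split; [|split]; intros; [apply gen_one | apply gen_mul | apply gen_inv]; auto. Qed.

Lemma derived_is_subgroup A S k : is_subgroup A S -> is_subgroup A (derived A k S).
Proof. destruct k; [auto | intros; apply gen_is_subgroup]. Qed.

Lemma derived_sub A S k : is_subgroup A S -> subset A (derived A k S) S.
Proof.
intros HS; induction k as [|k IHk]; intros x; [auto|].
apply gen_min; [exact HS|]; intros z (a & b & Ha & Hb & ->).
destruct HS as [_ [SM SV]]; unfold commutator; auto.
Qed.

Lemma derived_mono A S T k : subset A S T -> subset A (derived A k S) (derived A k T).
Proof.
intros ST; induction k as [|k IHk]; [exact ST|].
apply gen_min; [apply gen_is_subgroup|]; intros z (a & b & Ha & Hb & ->).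
apply gen_in; exists a, b; repeat split; apply IHk; assumption.
Qed.

(* [derived A (S k) Q] unfolds to [derived A 1 (derived A k Q)]. *)
Lemma derived_derived1 A Q k : subset A (derived A k (derived A 1 Q)) (derived A (S k) Q).
Proof.
induction k as [|k IHk]; intros x; [auto|].
exact (derived_mono A _ _ 1 IHk x).
Qed.

Section Homomorphisms.

Variables A B : grp.
Hypotheses (GA : is_group A) (GB : is_group B).
Variable phi : car A -> car B.

Lemma hom_one S : is_subgroup A S -> hom_on A B phi S -> phi (one A) = one B.
Proof.
intros [S1 _] Hphi; apply (mulgI B GB (phi (one A))).
rewrite <- Hphi, mul11, (mulg1 GB) by exact S1; reflexivity.
Qed.

Lemma hom_inv S x : is_subgroup A S -> hom_on A B phi S -> S x ->
  phi (inv A x) = inv B (phi x).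
Proof.
intros HS Hphi Sx; pose proof HS as [_ [_ SV]].
apply (invg_unique B GB); rewrite <- Hphi by auto.
rewrite (mulgV GA); exact (hom_one S HS Hphi).
Qed.

Lemma hom_commutator S x y : is_subgroup A S -> hom_on A B phi S -> S x -> S y ->
  phi (commutator A x y) = commutator B (phi x) (phi y).
Proof.
intros HS Hphi Sx Sy; pose proof HS as [_ [SM SV]]; unfold commutator.
rewrite !Hphi, !(hom_inv S) by auto; reflexivity.
Qed.

Lemma img_is_subgroup S : is_subgroup A S -> hom_on A B phi S -> is_subgroup B (img A B phi S).
Proof.
intros HS Hphi; pose proof HS as [S1 [SM SV]]; split; [|split].
- exists (one A); split; [exact S1 | symmetry; exact (hom_one S HS Hphi)].
- intros _ _ [x [Sx ->]] [y [Sy ->]]; exists (mul A x y); split; [auto | symmetry; auto].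
- intros _ [x [Sx ->]]; exists (inv A x); split; [auto | symmetry; apply (hom_inv S); auto].
Qed.

Lemma img_derived S k : is_subgroup A S -> hom_on A B phi S ->
  subset B (derived B k (img A B phi S)) (img A B phi (derived A k S)).
Proof.
intros HS Hphi; induction k as [|k IHk]; intros y; [auto|].
set (D := derived A k S).
assert (HD : is_subgroup A D) by exact (derived_is_subgroup A S k HS).
assert (HphiD : hom_on A B phi D)
  by (intros x x' Dx Dx'; apply Hphi; apply (derived_sub A S k HS); auto).
assert (HD1 : hom_on A B phi (derived A 1 D)).
{ intros x x' Dx Dx'; apply HphiD; apply (derived_sub A D 1 HD); auto. }
apply gen_min; [apply img_is_subgroup; [apply gen_is_subgroup | exact HD1]|].
intros z (a & b & Ha & Hb & ->).
destruct (IHk a Ha) as [a' [Ha' ->]], (IHk b Hb) as [b' [Hb' ->]].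
exists (commutator A a' b'); split.
- apply gen_in; exists a', b'; auto.
- symmetry; apply (hom_commutator D); auto.
Qed.

Lemma img_trivial S k : is_subgroup A S -> hom_on A B phi S ->
  trivial_set A (derived A k S) -> trivial_set B (derived B k (img A B phi S)).
Proof.
intros HS Hphi T y Hy; destruct (img_derived S k HS Hphi y Hy) as [x [Hx ->]].
rewrite (T x Hx); exact (hom_one S HS Hphi).
Qed.

End Homomorphisms.

Lemma embeds_sub A S T B : subset A S T -> embeds_into A T B -> embeds_into A S B.
Proof. intros ST [phi [Hhom Hinj]]; exists phi; split; intros x y Sx Sy; auto. Qed.

Lemma embeds_comp A B C phi S : hom_on A B phi S -> inj_on A B phi S ->
  embeds_into B (img A B phi S) C -> embeds_into A S C.
Proof.
intros Hhom Hinj [psi [Phom Pinj]]; exists (fun x => psi (phi x)); split.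
- intros x y Sx Sy; rewrite Hhom by auto; apply Phom; eexists; eauto.
- intros x y Sx Sy E; apply Hinj, Pinj; auto; eexists; eauto.
Qed.

Lemma embeds_trans A B C S : embeds_into A S B -> embeds_into B (fun _ => True) C ->
  embeds_into A S C.
Proof.
intros [phi [Hhom Hinj]] EBC; apply (embeds_comp A B C phi S Hhom Hinj).
apply (embeds_sub B _ _ C (fun _ _ => I) EBC).
Qed.

Lemma embeds_trivial A S B : trivial_set A S -> embeds_into A S B.
Proof.
intros T; exists (fun _ => one B); split.
- intros; symmetry; apply mul11.
- intros x y Sx Sy _; rewrite (T x Sx), (T y Sy); reflexivity.
Qed.

Definition solvable_embed (A : grp) (m : nat) (B : grp) : Prop :=
  forall H, is_subgroup A H -> trivial_set A (derived A m H) -> embeds_into A H B.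

Section CoordinatewiseMaps.

Variables A B : grp.
Variable phi : Z -> car A -> car B.
Hypothesis phi_one : forall i, phi i (one A) = one B.

Lemma finsupp_map (h : FS A) : finsupp B (fun i => phi i (proj1_sig h i)).
Proof.
destruct (proj2_sig h) as [N HN]; exists N; intros i Hi.
rewrite HN by exact Hi; apply phi_one.
Qed.

Definition fs_map (h : FS A) : FS B := exist _ _ (finsupp_map h).

Variable P : Z -> car A -> Prop.

Definition coords_in (h : FS A) : Prop := forall i, P i (proj1_sig h i).

Lemma fs_map_hom : (forall i, hom_on A B (phi i) (P i)) -> hom_on (DS A) (DS B) fs_map coords_in.
Proof. intros Hhom f g Pf Pg; fs_ext i; apply Hhom; auto. Qed.

Lemma fs_map_inj : (forall i, inj_on A B (phi i) (P i)) -> inj_on (DS A) (DS B) fs_map coords_in.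
Proof.
intros Hinj f g Pf Pg E; fs_ext i.
apply (Hinj i); auto; exact (f_equal (fun h => proj1_sig h i) E).
Qed.

End CoordinatewiseMaps.

Lemma finsupp_single W (w : car W) : finsupp W (fun i => if Z.eq_dec i 0 then w else one W).
Proof. exists 0; intros i Hi; destruct (Z.eq_dec i 0); [lia | reflexivity]. Qed.

Definition fs_single W (w : car W) : FS W := exist _ _ (finsupp_single W w).

Lemma embeds_DS_single W : embeds_into W (fun _ => True) (DS W).
Proof.
exists (fs_single W); split.
- intros x y _ _; fs_ext i; destruct (Z.eq_dec i 0); [reflexivity | symmetry; apply mul11].
- intros x y _ _ E; exact (f_equal (fun h => proj1_sig h 0) E).
Qed.

(* [zdec] enumerates Z as 0, -1, 1, -2, 2, ... *)
Definition zdec (n : nat) : Z :=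
  let z := Z.of_nat n in if z mod 2 =? 0 then z / 2 else - (z / 2) - 1.

Lemma zdec_surj z : exists n, zdec n = z.
Proof.
unfold zdec; destruct (Z_le_dec 0 z); [exists (Z.to_nat (2 * z)) | exists (Z.to_nat (- 2 * z - 1))];
  rewrite Z2Nat.id by lia; case Z.eqb_spec; intros; Z.div_mod_to_equations; lia.
Qed.

Lemma zdec_bound n : Z.of_nat n <= 2 * Z.abs (zdec n) + 1.
Proof. unfold zdec; case Z.eqb_spec; intros; Z.div_mod_to_equations; lia. Qed.

Definition unpair (k : Z) : Z * Z :=
  let (a, b) := Cantor.of_nat (Z.to_nat k) in (zdec a, zdec b).

Lemma unpair_surj i j : exists k, 0 <= k /\ unpair k = (i, j).
Proof.
destruct (zdec_surj i) as [a <-], (zdec_surj j) as [b <-].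
exists (Z.of_nat (Cantor.to_nat (a, b))); split; [lia|].
unfold unpair; rewrite Nat2Z.id, Cantor.cancel_of_to; reflexivity.
Qed.

Lemma unpair_bound k N M : 0 <= k -> Z.abs (fst (unpair k)) <= N -> Z.abs (snd (unpair k)) <= M ->
  k <= (2 * N + 2 * M + 3) ^ 2.
Proof.
unfold unpair; intros Hk; pose proof (Cantor.cancel_to_of (Z.to_nat k)) as E.
destruct (Cantor.of_nat (Z.to_nat k)) as [a b]; cbn [fst snd]; intros Ha Hb.
pose proof (zdec_bound a); pose proof (zdec_bound b); pose proof (Cantor.to_nat_spec a b) as Spec.
assert (Hs : 0 <= Z.of_nat (b + a) + 1 <= 2 * N + 2 * M + 3) by lia.
assert (Hk2 : k * 2 = Z.of_nat b * 2 + Z.of_nat (b + a) * (Z.of_nat (b + a) + 1)) by lia.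
nia.
Qed.

Lemma finsupp_uniform A (F : Z -> FS A) (N : nat) :
  exists M, forall i j, Z.abs i <= Z.of_nat N -> M < Z.abs j -> proj1_sig (F i) j = one A.
Proof.
induction N as [|N [M HM]].
- destruct (proj2_sig (F 0)) as [M HM]; exists M; intros i j Hi Hj.
  replace i with 0 by lia; auto.
- destruct (proj2_sig (F (Z.of_nat (S N)))) as [M1 H1],
    (proj2_sig (F (- Z.of_nat (S N)))) as [M2 H2].
  exists (Z.max M (Z.max M1 M2)); intros i j Hi Hj.
  destruct (Z_le_dec (Z.abs i) (Z.of_nat N)); [apply HM; lia|].
  destruct (Z_le_dec 0 i);
    [replace i with (Z.of_nat (S N)) by lia | replace i with (- Z.of_nat (S N)) by lia];
    [apply H1 | apply H2]; lia.
Qed.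

(* The guard matters: [Z.to_nat] would send every negative [k] to the index of [(0, 0)]. *)
Definition flat_fun W (F : FS (DS W)) (k : Z) : car W :=
  if 0 <=? k then proj1_sig (proj1_sig F (fst (unpair k))) (snd (unpair k)) else one W.

Lemma finsupp_flat W F : finsupp W (flat_fun W F).
Proof.
destruct (proj2_sig F) as [N HN], (finsupp_uniform W (proj1_sig F) (Z.to_nat N)) as [M HM].
exists ((2 * Z.abs N + 2 * Z.abs M + 3) ^ 2); intros k Hk; unfold flat_fun.
destruct (Z.leb_spec 0 k); [|reflexivity].
destruct (Z_lt_dec N (Z.abs (fst (unpair k)))) as [Hi | Hi]; [rewrite HN by exact Hi; reflexivity|].
destruct (Z_lt_dec M (Z.abs (snd (unpair k)))) as [Hj | Hj]; [apply HM; lia|].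
pose proof (unpair_bound k (Z.abs N) (Z.abs M) ltac:(lia) ltac:(lia) ltac:(lia)); lia.
Qed.

Lemma embeds_DS_DS W : embeds_into (DS (DS W)) (fun _ => True) (DS W).
Proof.
exists (fun F => exist _ _ (finsupp_flat W F)); split.
- intros F G _ _; fs_ext i; unfold flat_fun.
  destruct (0 <=? i); [reflexivity | symmetry; apply mul11].
- intros F G _ _ E; apply FS_eq, functional_extensionality; intros i.
  apply FS_eq, functional_extensionality; intros j.
  destruct (unpair_surj i j) as [k [Hk Ek]].
  pose proof (f_equal (fun h => proj1_sig h k) E) as Ek'; simpl in Ek'; unfold flat_fun in Ek'.
  rewrite Ek in Ek'; destruct (Z.leb_spec 0 k); [exact Ek' | lia].
Qed.

Definition coord_img A (H : car (DS A) -> Prop) (i : Z) : car A -> Prop :=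
  img (DS A) A (fun h => proj1_sig h i) H.

Lemma coord_hom A H i : hom_on (DS A) A (fun h : FS A => proj1_sig h i) H.
Proof. intros x y _ _; reflexivity. Qed.

Lemma solvable_embed_DS A B m : is_group A -> is_group B -> solvable_embed A m B ->
  solvable_embed (DS A) m (DS B).
Proof.
intros GA GB E H HH T.
assert (EH : forall i, exists phi,
  hom_on A B phi (coord_img A H i) /\ inj_on A B phi (coord_img A H i)).
{ intros i; apply E; [apply img_is_subgroup | apply img_trivial];
    auto using DS_group, coord_hom. }
destruct (choice _ EH) as [phi Hphi].
assert (phi_one : forall i, phi i (one A) = one B).
{ intros i; apply (hom_one A B GB (phi i) (coord_img A H i)); [|apply Hphi].
  apply img_is_subgroup; auto using DS_group, coord_hom. }
apply (embeds_sub (DS A) _ (coords_in A (coord_img A H))).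
- intros h Hh i; exists h; auto.
- exists (fs_map A B phi phi_one); split; [apply fs_map_hom | apply fs_map_inj];
    intros i; apply Hphi.
Qed.

Lemma solvable_embed_DS_Gr A m : is_group A -> solvable_embed A (S m) (Gr (S m)) ->
  solvable_embed (DS A) (S m) (Gr (S m)).
Proof.
intros GA E H HH T; apply (embeds_trans _ (DS (Gr (S m)))).
- apply (solvable_embed_DS A (Gr (S m)) (S m)); auto using Gr_group.
- exact (embeds_DS_DS (Wreath (Gr m))).
Qed.

Section IntegerSubgroups.

Variable P : Z -> Prop.
Hypotheses (P0 : P 0) (Psub : forall x y, P x -> P y -> P (x - y)).

Lemma Zsubgroup_mul d q : P d -> P (q * d).
Proof.
intros Pd; induction q as [|q IHq|q IHq] using Z.peano_ind.
- exact P0.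
- rewrite Z.mul_succ_l; replace (q * d + d) with (q * d - (0 - d)) by ring; auto.
- rewrite Z.mul_pred_l; auto.
Qed.

Lemma Zsubgroup_generator s : P s -> s <> 0 -> exists d, 0 < d /\ P d /\ forall x, P x -> (d | x).
Proof.
intros Ps Hs; set (Q n := P (Z.of_nat (S n))).
assert (HQ : exists n, Q n).
{ destruct (Z_lt_dec 0 s); [exists (Z.to_nat (s - 1)) | exists (Z.to_nat (- s - 1))]; unfold Q;
    [replace (Z.of_nat _) with s by lia | replace (Z.of_nat _) with (0 - s) by lia]; auto. }
destruct (dec_inh_nat_subset_has_unique_least_element Q (fun n => classic (Q n)) HQ)
  as [n [[Qn Hmin] _]].
set (d := Z.of_nat (S n)) in *.
exists d; split; [lia | split; [exact Qn|]].
intros x Px; apply Z.mod_divide; [lia|].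
pose proof (Z.mod_pos_bound x d ltac:(lia)).
assert (Pr : P (x mod d)).
{ rewrite Z.mod_eq by lia; rewrite Z.mul_comm; apply Psub; auto using Zsubgroup_mul. }
destruct (Z.eq_dec (x mod d) 0) as [E | E]; [exact E | exfalso].
assert (Hle := Hmin (Z.to_nat (x mod d - 1))); unfold Q in Hle.
replace (Z.of_nat (S (Z.to_nat (x mod d - 1)))) with (x mod d) in Hle by lia.
specialize (Hle Pr); lia.
Qed.

End IntegerSubgroups.

Section WreathMap.

Variables X B : grp.
Variable phi : car X -> car B.
Hypothesis phi_one : phi (one X) = one B.
Variable M : car X -> Prop.

Definition wreath_map (k : car (Wreath X)) : car (Wreath B) :=
  (fs_map X B (fun _ => phi) (fun _ => phi_one) (fst k), snd k).

Definition wreath_coords_in (k : car (Wreath X)) : Prop := forall j, M (proj1_sig (fst k) j).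

Lemma wreath_map_hom : hom_on X B phi M -> hom_on (Wreath X) (Wreath B) wreath_map wreath_coords_in.
Proof.
intros Hhom [f s] [g t] Mf Mg; unfold wreath_map; simpl; unfold wr_mul; simpl.
f_equal; fs_ext i; apply Hhom; [apply Mf | apply Mg].
Qed.

Lemma wreath_map_inj : inj_on X B phi M -> inj_on (Wreath X) (Wreath B) wreath_map wreath_coords_in.
Proof.
intros Hinj [f s] [g t] Mf Mg E; unfold wreath_map in E; simpl in E.
injection E as Ef ->; f_equal; fs_ext i.
apply Hinj; [apply Mf | apply Mg | exact (f_equal (fun h => h i) Ef)].
Qed.

End WreathMap.

Lemma derived1_base A Q k : derived (Wreath A) 1 Q k -> snd k = 0.
Proof.
intros Hk; induction Hk as [z (a & b & _ & _ & ->)| | x y _ IHx _ IHy | x _ IHx]; simpl.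
- destruct a, b; simpl; lia.
- reflexivity.
- lia.
- lia.
Qed.

Definition coord0 X (k : car (Wreath X)) : car X := proj1_sig (fst k) 0.

Lemma coord0_hom X : hom_on (Wreath X) X (coord0 X) (fun k => snd k = 0).
Proof. intros [f s] [g t] Hs _; simpl in Hs; subst s; reflexivity. Qed.

Section PureShift.

Variable X : grp.
Hypothesis GX : is_group X.
Variable K : car (Wreath X) -> Prop.
Hypothesis HK : is_subgroup (Wreath X) K.
Hypothesis K_shift : K (fs_one X, 1).

Definition base_coords : car X -> Prop := fun x => exists f, K (f, 0) /\ x = proj1_sig f 0.

Lemma pure_shift_in z : K (fs_one X, z).
Proof.
pose proof HK as [K1 [KM KV]]; rewrite <- (Z.mul_1_r z).
apply (Zsubgroup_mul (fun z => K (fs_one X, z)) K1); [intros x y Kx Ky | exact K_shift].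
replace (fs_one X, x - y)
  with (mul (Wreath X) (fs_one X, x) (inv (Wreath X) (fs_one X, y))); [auto|].
simpl; unfold wr_mul, wr_inv; simpl; f_equal; fs_ext i; rewrite inv1; apply mul11.
Qed.

Lemma base_coords_subgroup : is_subgroup X base_coords.
Proof.
pose proof HK as [K1 [KM KV]]; split; [|split].
- exists (fs_one X); split; [exact K1 | reflexivity].
- intros _ _ [f [Kf ->]] [g [Kg ->]].
  exists (fst (mul (Wreath X) (f, 0) (g, 0))); split; [exact (KM _ _ Kf Kg) | reflexivity].
- intros _ [f [Kf ->]].
  exists (fst (inv (Wreath X) (f, 0))); split; [exact (KV _ Kf) | reflexivity].
Qed.

Lemma coords_in_base f s j : K (f, s) -> base_coords (proj1_sig f j).
Proof.
intros Kf; pose proof HK as [K1 [KM KV]].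
set (e := mul (Wreath X) (mul (Wreath X) (fs_one X, - j) (mul (Wreath X) (f, s) (fs_one X, - s)))
                         (fs_one X, j)).
assert (Ke : K e) by (unfold e; auto using pure_shift_in).
assert (E : snd e = 0) by (unfold e; simpl; lia).
exists (fst e); split; [rewrite <- E, <- surjective_pairing; exact Ke|].
unfold e; simpl; rewrite (mul1g GX), !(mulg1 GX); f_equal; lia.
Qed.

(* [f 0] is the 0-th coordinate of the commutator of [(f, 0)^-1] with a shift beyond the support
   of [f]. *)
Lemma base_coords_commutators :
  subset X base_coords (img (Wreath X) X (coord0 X) (derived (Wreath X) 1 K)).
Proof.
pose proof HK as [K1 [KM KV]]; intros _ [f [Kf ->]]; destruct (proj2_sig f) as [N HN].
exists (commutator (Wreath X) (inv (Wreath X) (f, 0)) (fs_one X, Z.abs N + 1)); split.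
- apply gen_in; do 2 eexists; repeat split; [apply KV, Kf | apply pure_shift_in].
- unfold commutator, coord0; simpl.
  rewrite (HN (- - (Z.abs N + 1) - 0)) by lia.
  rewrite inv1, !(invgK X GX), !(mulg1 GX); reflexivity.
Qed.

Lemma base_coords_trivial m : trivial_set (Wreath X) (derived (Wreath X) (S m) K) ->
  trivial_set X (derived X m base_coords).
Proof.
intros T x Hx; apply (derived_mono X _ _ m base_coords_commutators) in Hx.
assert (Hhom : hom_on (Wreath X) X (coord0 X) (derived (Wreath X) 1 K)).
{ intros k k' Hk Hk'; apply coord0_hom; eapply derived1_base; eassumption. }
destruct (img_derived _ _ (Wreath_group X GX) GX (coord0 X) _ m
            (derived_is_subgroup _ K 1 HK) Hhom x Hx) as [k [Hk ->]].
rewrite (T k (derived_derived1 _ K m k Hk)); reflexivity.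
Qed.

Lemma wreath_embed_of_pure_shift B m : is_group B -> solvable_embed X m B ->
  trivial_set (Wreath X) (derived (Wreath X) (S m) K) -> embeds_into (Wreath X) K (Wreath B).
Proof.
intros GB E T.
destruct (E base_coords base_coords_subgroup (base_coords_trivial m T)) as [phi [Hhom Hinj]].
pose proof (hom_one X B GB phi base_coords base_coords_subgroup Hhom) as phi_one.
apply (embeds_sub _ _ (wreath_coords_in X base_coords)).
- intros [f s] Kf j; exact (coords_in_base f s j Kf).
- exists (wreath_map X B phi phi_one); split;
    [exact (wreath_map_hom X B phi phi_one _ Hhom) | exact (wreath_map_inj X B phi phi_one _ Hinj)].
Qed.

End PureShift.

Section Conjugation.

Variable X : grp.
Hypothesis GX : is_group X.
Variable c : Z -> car X.
Hypothesis c_stable : forall s, exists M, forall j, M < Z.abs j -> c j = c (j - s).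

Definition conj_coord (k : car (Wreath X)) (j : Z) : car X :=
  mul X (mul X (inv X (c j)) (proj1_sig (fst k) j)) (c (j - snd k)).

Lemma finsupp_conj k : finsupp X (conj_coord k).
Proof.
destruct (c_stable (snd k)) as [M HM], (proj2_sig (fst k)) as [N HN].
exists (Z.max M N); intros j Hj; unfold conj_coord.
rewrite HN, <- HM by lia; rewrite (mulg1 GX); apply (mulVg GX).
Qed.

Definition conjw (k : car (Wreath X)) : car (Wreath X) := (exist _ _ (finsupp_conj k), snd k).

Lemma conjw_hom : hom_on (Wreath X) (Wreath X) conjw (fun _ => True).
Proof.
intros [f s] [g t] _ _; unfold conjw; simpl; unfold wr_mul; simpl.
f_equal; fs_ext i; unfold conj_coord; simpl.
rewrite Z.sub_add_distr, !(mulgA GX).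
rewrite <- ((mulgA GX) _ (c (i - s))), (mulgV GX), (mulg1 GX); reflexivity.
Qed.

Lemma conjw_inj : inj_on (Wreath X) (Wreath X) conjw (fun _ => True).
Proof.
intros [f s] [g t] _ _ E.
pose proof (f_equal snd E) as Est; simpl in Est; subst t.
f_equal; fs_ext i.
pose proof (f_equal (fun k => proj1_sig (fst k) i) E) as Ei; simpl in Ei; unfold conj_coord in Ei.
exact (mulgI X GX _ _ _ (mulIg X GX _ _ _ Ei)).
Qed.

End Conjugation.

Section CumulativeProduct.

Variable X : grp.
Hypothesis GX : is_group X.
Variable g : Z -> car X.
Variable N : Z.
Hypothesis g_supp : forall j, N < Z.abs j -> g j = one X.

Fixpoint partial_prod (n : nat) : car X :=
  match n with
  | O => one X
  | S n' => mul X (g (Z.of_nat n' - N)) (partial_prod n')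
  end.

(* [cumprod j] is the product [g j * g (j - 1) * ... * g (- N)], empty for [j < - N]. *)
Definition cumprod (j : Z) : car X := partial_prod (Z.to_nat (j + N + 1)).

Lemma cumprod_step j : cumprod j = mul X (g j) (cumprod (j - 1)).
Proof.
unfold cumprod; destruct (Z_le_dec (j + N + 1) 0).
- replace (Z.to_nat (j + N + 1)) with 0%nat by lia.
  replace (Z.to_nat (j - 1 + N + 1)) with 0%nat by lia.
  rewrite g_supp by lia; symmetry; apply mul11.
- replace (Z.to_nat (j + N + 1)) with (S (Z.to_nat (j - 1 + N + 1))) by lia; simpl.
  do 2 f_equal; lia.
Qed.

Lemma cumprod_stable s : exists M, forall j, M < Z.abs j -> cumprod j = cumprod (j - s).
Proof.
assert (Hlow : forall j, j < - N -> cumprod j = one X).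
{ intros j Hj; unfold cumprod; replace (Z.to_nat (j + N + 1)) with 0%nat by lia; reflexivity. }
assert (Hhigh : forall j, N <= j -> cumprod j = cumprod N).
{ intros j Hj; replace j with (N + Z.of_nat (Z.to_nat (j - N))) by lia.
  induction (Z.to_nat (j - N)) as [|n IHn]; [f_equal; lia|].
  rewrite cumprod_step, g_supp, (mul1g GX) by lia.
  rewrite <- IHn; f_equal; lia. }
exists (Z.abs N + Z.abs s); intros j Hj.
destruct (Z_lt_dec j 0); [rewrite !Hlow by lia | rewrite (Hhigh j), (Hhigh (j - s)) by lia];
  reflexivity.
Qed.

End CumulativeProduct.

Lemma wreath_embed_of_unit_shift X B m (K : car (Wreath X) -> Prop) g :
  is_group X -> is_group B -> solvable_embed X m B ->
  is_subgroup (Wreath X) K -> K (g, 1) -> trivial_set (Wreath X) (derived (Wreath X) (S m) K) ->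
  embeds_into (Wreath X) K (Wreath B).
Proof.
intros GX GB E HK Kg T.
destruct (proj2_sig g) as [N HN].
set (c := cumprod X (proj1_sig g) N).
pose (conj := conjw X GX c (cumprod_stable X GX (proj1_sig g) N HN)).
assert (Hhom : hom_on (Wreath X) (Wreath X) conj K) by (intros x y _ _; apply conjw_hom; exact I).
assert (Hinj : inj_on (Wreath X) (Wreath X) conj K) by (intros x y _ _; apply conjw_inj; exact I).
pose proof (Wreath_group X GX) as GW.
assert (Kshift : img _ _ conj K (fs_one X, 1)).
{ exists (g, 1); split; [exact Kg|].
  unfold conj, conjw; simpl; f_equal; fs_ext i; unfold conj_coord; simpl.
  rewrite <- (mulgA GX), <- (cumprod_step X (proj1_sig g) N HN), (mulVg GX); reflexivity. }
apply (embeds_comp _ _ _ conj K Hhom Hinj).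
apply (wreath_embed_of_pure_shift X GX _ (img_is_subgroup _ _ GW GW conj K HK Hhom) Kshift
         B m GB E).
exact (img_trivial _ _ GW GW conj K (S m) HK Hhom T).
Qed.

Section Regroup.

Variable A : grp.
Variable d : Z.

Definition block (h : FS A) (q r : Z) : car A :=
  if andb (0 <=? r) (r <? d) then proj1_sig h (q * d + r) else one A.

Lemma finsupp_block h q : finsupp A (block h q).
Proof.
exists (Z.abs d); intros r Hr; unfold block.
destruct (Z.leb_spec 0 r), (Z.ltb_spec r d); simpl; [lia | reflexivity ..].
Qed.

Definition blocks (h : FS A) (q : Z) : FS A := exist _ _ (finsupp_block h q).

Lemma finsupp_blocks h : finsupp (DS A) (blocks h).
Proof.
destruct (proj2_sig h) as [N HN]; exists (Z.abs N); intros q Hq; fs_ext r; unfold block.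
destruct (Z.leb_spec 0 r), (Z.ltb_spec r d); simpl; try reflexivity.
apply HN; nia.
Qed.

Definition regroup (k : car (Wreath A)) : car (Wreath (DS A)) :=
  (exist _ _ (finsupp_blocks (fst k)), snd k / d).

Hypothesis d_pos : 0 < d.

Definition shift_in_dZ (k : car (Wreath A)) : Prop := (d | snd k).

Lemma regroup_hom : hom_on (Wreath A) (Wreath (DS A)) regroup shift_in_dZ.
Proof.
intros [f s] [g t] [a Ha] [b Hb]; simpl in Ha, Hb; subst s t.
unfold regroup; simpl; unfold wr_mul; simpl; f_equal.
- apply (FS_eq (DS A)), functional_extensionality; intros q.
  apply FS_eq, functional_extensionality; intros r.
  simpl; unfold block; rewrite Z.div_mul by lia.
  destruct (andb (0 <=? r) (r <? d)); [simpl; do 2 f_equal; ring | symmetry; apply mul11].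
- rewrite <- Z.mul_add_distr_r, !Z.div_mul by lia; reflexivity.
Qed.

Lemma regroup_inj : inj_on (Wreath A) (Wreath (DS A)) regroup shift_in_dZ.
Proof.
intros [f s] [g t] [a Ha] [b Hb] E; simpl in Ha, Hb; subst s t.
pose proof (f_equal snd E) as Es; simpl in Es; rewrite !Z.div_mul in Es by lia; subst b.
f_equal; fs_ext j.
pose proof (f_equal (fun k => proj1_sig (proj1_sig (fst k) (j / d)) (j mod d)) E) as Ej.
simpl in Ej; unfold block in Ej.
pose proof (Z.mod_pos_bound j d d_pos).
destruct (Z.leb_spec 0 (j mod d)), (Z.ltb_spec (j mod d) d); try lia; simpl in Ej.
rewrite (Z.div_mod j d), Z.mul_comm by lia; exact Ej.
Qed.

End Regroup.

Lemma fst_hom_on_base A : hom_on (Wreath A) (DS A) fst (fun k => snd k = 0).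
Proof. intros [f s] [g t] Hs _; simpl in Hs; subst s; fs_ext i; rewrite Z.sub_0_r; reflexivity. Qed.

Lemma fst_inj_on_base A : inj_on (Wreath A) (DS A) fst (fun k => snd k = 0).
Proof. intros [f s] [g t] Hs Ht E; simpl in *; subst; reflexivity. Qed.

Lemma wreath_shifts_cyclic A K k0 : is_subgroup (Wreath A) K -> K k0 -> snd k0 <> 0 ->
  exists t, K t /\ 0 < snd t /\ subset (Wreath A) K (shift_in_dZ A (snd t)).
Proof.
intros [K1 [KM KV]] Kk0 Hk0.
destruct (Zsubgroup_generator (fun s => exists k, K k /\ snd k = s)) with (snd k0)
  as (d & Hd & [t [Kt <-]] & Hdiv); eauto.
- intros _ _ [k [Kk <-]] [l [Kl <-]]; exists (mul _ k (inv _ l)); auto.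
- exists t; repeat split; auto; intros k Kk; apply Hdiv; eauto.
Qed.

Lemma wreath_embed_regroup A B m K t : is_group A -> is_group B -> solvable_embed (DS A) m B ->
  is_subgroup (Wreath A) K -> K t -> 0 < snd t -> subset (Wreath A) K (shift_in_dZ A (snd t)) ->
  trivial_set (Wreath A) (derived (Wreath A) (S m) K) -> embeds_into (Wreath A) K (Wreath B).
Proof.
intros GA GB E HK Kt Ht HdK T.
assert (Hhom : hom_on _ _ (regroup A (snd t)) K) by (intros x y Kx Ky; apply regroup_hom; auto).
assert (Hinj : inj_on _ _ (regroup A (snd t)) K) by (intros x y Kx Ky; apply regroup_inj; auto).
pose proof (Wreath_group A GA) as GW; pose proof (Wreath_group (DS A) (DS_group A GA)) as GW'.
apply (embeds_comp _ _ _ (regroup A (snd t)) K Hhom Hinj).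
apply (wreath_embed_of_unit_shift _ _ m _ (fst (regroup A (snd t) t))); auto using DS_group.
- apply img_is_subgroup; auto.
- exists t; split; [exact Kt|]; unfold regroup; simpl; rewrite Z.div_same by lia; reflexivity.
- apply img_trivial; auto.
Qed.

Lemma solvable_embed_Wreath A m : is_group A -> solvable_embed A (S m) (Gr (S m)) ->
  solvable_embed (DS A) m (Gr m) -> solvable_embed (Wreath A) (S m) (Gr (S m)).
Proof.
intros GA EA EDS K HK T.
destruct (classic (exists k, K k /\ snd k <> 0)) as [[k0 [Kk0 Hk0]] | Hbase].
- destruct (wreath_shifts_cyclic A K k0 HK Kk0 Hk0) as (t & Kt & Ht & HdK).
  apply (embeds_trans _ (Wreath (Gr m))); [|exact (embeds_DS_single (Wreath (Gr m)))].
  apply (wreath_embed_regroup A _ m K t); auto using Gr_group.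
- assert (Kbase : subset _ K (fun k => snd k = 0)).
  { intros k Kk; apply NNPP; intros Hk; apply Hbase; eauto. }
  assert (Hhom : hom_on (Wreath A) (DS A) fst K) by (intros x y Kx Ky; apply fst_hom_on_base; auto).
  assert (Hinj : inj_on (Wreath A) (DS A) fst K) by (intros x y Kx Ky; apply fst_inj_on_base; auto).
  apply (embeds_comp (Wreath A) (DS A) _ fst K Hhom Hinj).
  apply solvable_embed_DS_Gr; auto using DS_group, Wreath_group, img_is_subgroup, img_trivial.
Qed.

Lemma solvable_embed_zero A B : solvable_embed A 0 B.
Proof. intros H _ T; exact (embeds_trivial A H B T). Qed.

Lemma solvable_embed_Gr n m : solvable_embed (Gr n) m (Gr m).
Proof.
revert m; induction n as [|n IHn]; intros m.
- intros H _ _; apply embeds_trivial; intros x _; destruct x; reflexivity.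
- destruct m as [|m]; [apply solvable_embed_zero|].
  apply solvable_embed_DS_Gr; [apply Wreath_group, Gr_group|].
  apply solvable_embed_Wreath; [apply Gr_group | apply IHn|].
  destruct m as [|m]; [apply solvable_embed_zero|].
  apply solvable_embed_DS_Gr; [apply Gr_group | apply IHn].
Qed.

Theorem lemma4 (m n : nat) (H : car (Gr n) -> Prop) :
  (m <= n)%nat -> is_subgroup (Gr n) H -> derived_length (Gr n) H m ->
  embeds_into (Gr n) H (Gr m).
Proof.
intros _ HH [Htriv _]; exact (solvable_embed_Gr n m H HH Htriv).
Qed.
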